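(* Let $f$ be a connectivity function on a finite set $V$ and let $f^*$ be an interpolation of $f$. Let $A,B,S,T$ be pairwise disjoint subsets of $V$, and let $D$ be the blocking digraph for $(S,T)$ with respect to $f^*$. Then $f^*(S\cup A,T\cup B)=f^*(S,T)$ if and only if $D$ has no arc from a vertex of $A\cup\{S^\circ\}$ to a vertex of $B\cup\{T^\circ\}$.
   Context: A connectivity function on a finite set $V$ is a function $f:2^V\to\mathbb Z$ such that $f(X)=f(V-X)$ for all $X\subseteq V$, $f(X)+f(Y)\ge f(X\cup Y)+f(X\cap Y)$ for all $X,Y\subseteq V$, and $f(\emptyset)=0$. An interpolation of $f$ is a function $f^*$ defined on pairs $(X,Y)$ of disjoint subsets of $V$, with integer values, such that (i) $f^*(X,V-X)=f(X)$ for all $X\subseteq V$; (ii) if $C\cap D=\emptyset$, $A\subseteq C$, $B\subseteq D$ then $f^*(A,B)\le f^*(C,D)$; (iii) $f^*(A,B)+f^*(C,D)\ge f^*(A\cap C,B\cup D)+f^*(A\cup C,B\cap D)$ for all such pairs $(A,B),(C,D)$; (iv) $f^*(\emptyset,\emptyset)=f(\emptyset)$. For disjoint $S,T\subseteq V$, the blocking digraph for $(S,T)$ with respect to $f^*$ is the digraph on vertex set $(V-(S\cup T))\cup\{S^\circ,T^\circ\}$ (with $S^\circ,T^\circ$ two new vertices) with arcs: $(S^\circ,x)$ for $x\in V-(S\cup T)$ whenever $f^*(S,T\cup\{x\})>f^*(S,T)$; $(x,T^\circ)$ for $x\in V-(S\cup T)$ whenever $f^*(S\cup\{x\},T)>f^*(S,T)$;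 and $(x,y)$ for distinct $x,y\in V-(S\cup T)$ whenever $f^*(S\cup\{x\},T\cup\{y\})>f^*(S,T)$. *)

From mathcomp Require Import all_boot all_order all_algebra.
Set Implicit Arguments. Unset Strict Implicit. Unset Printing Implicit Defensive.
Import Order.TTheory GRing.Theory Num.Theory.
Local Open Scope ring_scope.

Section Conn.
Variable V : finType.

Definition connectivity_function (f : {set V} -> int) : Prop :=
  [/\ (forall X : {set V}, f X = f (~: X)),
      (forall X Y : {set V}, f (X :|: Y) + f (X :&: Y) <= f X + f Y)
    & f set0 = 0].

(* f* is modelled as a total function on pairs of subsets; only its values on
   disjoint pairs are constrained (and used). *)
Definition interpolation (f : {set V} -> int)
    (fs : {set V} -> {set V} -> int) : Prop :=
  [/\ (forall X : {set V}, fs X (~: X) = f X),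
      (forall A B C D : {set V}, [disjoint C & D] -> A \subset C -> B \subset D ->
          fs A B <= fs C D),
      (forall A B C D : {set V}, [disjoint A & B] -> [disjoint C & D] ->
          fs (A :&: C) (B :|: D) + fs (A :|: C) (B :&: D) <= fs A B + fs C D)
    & fs set0 set0 = f set0].

(* vertices of the blocking digraph: S°, T°, and elements of V (only those
   outside S ∪ T are vertices; see [bvertex]) *)
Inductive bvert := SO | TO | Vx of V.

Definition bvertex (S T : {set V}) (u : bvert) : bool :=
  match u with Vx x => x \notin S :|: T | _ => true end.

Definition blocking_arc (fs : {set V} -> {set V} -> int) (S T : {set V})
    (u v : bvert) : bool :=
  match u, v with
  | SO, Vx x => (x \notin S :|: T) && (fs S T < fs S (x |: T))
  | Vx x, TO => (x \notin S :|: T) && (fs S T < fs (x |: S) T)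
  | Vx x, Vx y => [&& x != y, x \notin S :|: T, y \notin S :|: T &
                      fs S T < fs (x |: S) (y |: T)]
  | _, _ => false
  end.

Definition in_src (A : {set V}) (u : bvert) : bool :=
  match u with SO => true | Vx x => x \in A | TO => false end.
Definition in_tgt (B : {set V}) (u : bvert) : bool :=
  match u with TO => true | Vx x => x \in B | SO => false end.

End Conn.

(* The forward direction is monotonicity of f*: every arc from A ∪ {S°} to
   B ∪ {T°} raises f*(S,T) by adding at most one element of A to S and one of B
   to T, so it would raise f*(S ∪ A, T ∪ B) above f*(S,T).  Conversely, along a
   chain of sets disjoint from a fixed X, submodularity of Y ↦ f*(X,Y) (and of
   Y ↦ f*(Y,X)) spreads "no single element increases the value" to "the union
   of them all does not increase it".  Applying this first to T ∪ B with X = S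
   and with X = S ∪ {x} for x in A, then to S ∪ A with X = T ∪ B, yields
   f*(S ∪ A, T ∪ B) <= f*(S,T).  Only axioms (ii) and (iii) of an interpolation
   are used. *)
From mathcomp Require Import all_boot all_order all_algebra.
Set Implicit Arguments. Unset Strict Implicit. Unset Printing Implicit Defensive.
Import Order.TTheory GRing.Theory Num.Theory.
Local Open Scope ring_scope.

Section SubmodularOn.
Variables (V : finType) (R : numDomainType).

Definition submodular_on (U : {set V}) (g : {set V} -> R) : Prop :=
  forall Y Z : {set V}, Y \subset U -> Z \subset U ->
    g (Y :|: Z) + g (Y :&: Z) <= g Y + g Z.

Lemma submodular_setU_le (U : {set V}) (g : {set V} -> R) (Y B : {set V}) :
  submodular_on U g -> Y :|: B \subset U ->
  {in B, forall y, g (y |: Y) <= g Y} -> g (Y :|: B) <= g Y.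
Proof.
move=> submod_g; move: {2}#|B| (erefl #|B|) => n.
elim: n B => [|n IHn] B cardB YB_U gB.
  by rewrite (cards0_eq cardB) setU0.
have [y By] : {y | y \in B} by apply/sigW/card_gt0P; rewrite cardB.
set B' := B :\ y.
have B'y : y \notin B' by rewrite !inE eqxx.
have B'B : B' \subset B by apply: subsetDl.
have YB'_U : Y :|: B' \subset U by apply: subset_trans YB_U; apply: setUS.
have yY_U : y |: Y \subset U.
  by apply: subset_trans YB_U; rewrite setUC setUS // sub1set.
have le_YB' : g (Y :|: B') <= g Y.
  apply: IHn => // [|z zB']; last by apply: gB; apply: (subsetP B'B).
  by apply/eqP; rewrite -eqSS -cardB (cardsD1 y B) By.
have -> : Y :|: B = (Y :|: B') :|: (y |: Y).
  by rewrite [RHS]setUC -setUA [Y :|: (Y :|: _)]setUA setUid setUCA setD1K.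
have meet : (Y :|: B') :&: (y |: Y) = Y.
  apply/setP=> z; rewrite !inE.
  case: (eqVneq z y) => [->|_]; rewrite ?(negbTE B'y) /= ?andbT ?orbF //=.
  by case: (z \in Y); rewrite ?andbF.
have := submod_g _ _ YB'_U yY_U; rewrite meet.
by move=> /le_trans/(_ (lerD le_YB' (gB y By))); rewrite lerD2r.
Qed.

End SubmodularOn.

Section Interpolation.
Variables (V : finType) (fs : {set V} -> {set V} -> int).
Hypothesis fs_monotone : forall A B C D : {set V},
  [disjoint C & D] -> A \subset C -> B \subset D -> fs A B <= fs C D.
Hypothesis fs_submodular : forall A B C D : {set V},
  [disjoint A & B] -> [disjoint C & D] ->
  fs (A :&: C) (B :|: D) + fs (A :|: C) (B :&: D) <= fs A B + fs C D.

Lemma interp_submodular_r (X : {set V}) : submodular_on (~: X) (fs X).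
Proof.
move=> Y Z; rewrite -!disjoints_subset ![[disjoint _ & X]]disjoint_sym => dXY dXZ.
by have := fs_submodular dXY dXZ; rewrite setIid setUid.
Qed.

Lemma interp_submodular_l (X : {set V}) : submodular_on (~: X) (fs^~ X).
Proof.
move=> Y Z; rewrite -!disjoints_subset => dYX dZX.
by have := fs_submodular dYX dZX; rewrite setIid setUid addrC.
Qed.

Lemma interp_setUr_le (X Y B : {set V}) : [disjoint X & Y :|: B] ->
  {in B, forall y, fs X (y |: Y) <= fs X Y} -> fs X (Y :|: B) <= fs X Y.
Proof.
rewrite disjoint_sym disjoints_subset => YB_X.
exact: submodular_setU_le (@interp_submodular_r X) YB_X.
Qed.

Lemma interp_setUl_le (X Y A : {set V}) : [disjoint Y :|: A & X] ->
  {in A, forall x, fs (x |: Y) X <= fs Y X} -> fs (Y :|: A) X <= fs Y X.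
Proof.
rewrite disjoints_subset => YA_X.
exact: submodular_setU_le (@interp_submodular_l X) YA_X.
Qed.

Lemma interp_setU_le_local (A B S T : {set V}) :
  [disjoint S :|: A & T :|: B] ->
  {in B, forall y, fs S (y |: T) <= fs S T} ->
  {in A, forall x, fs (x |: S) T <= fs S T} ->
  {in A & B, forall x y, fs (x |: S) (y |: T) <= fs S T} ->
  fs (S :|: A) (T :|: B) <= fs S T.
Proof.
move=> dSA_TB le_B le_A le_AB.
have dS_TB : [disjoint S & T :|: B] by apply: disjointWl dSA_TB; apply: subsetUl.
have dxS_TB x : x \in A -> [disjoint x |: S & T :|: B].
  move=> xA; apply: disjointWl dSA_TB.
  by rewrite setUC setUS // sub1set.
have le_S_TB : fs S T <= fs S (T :|: B) by apply: fs_monotone; rewrite ?subsetUl.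
apply: le_trans (interp_setUr_le dS_TB le_B).
apply: interp_setUl_le => // x xA; apply: le_trans le_S_TB.
apply: le_trans (le_A x xA); apply: interp_setUr_le => [|y yB]; first exact: dxS_TB.
apply: le_trans (le_AB x y xA yB) _; apply: fs_monotone; rewrite ?subsetUr //.
by apply: disjointWr (dxS_TB x xA); apply: subsetUl.
Qed.

Lemma no_blocking_arcP (A B S T : {set V}) :
  [disjoint A & B] -> [disjoint A :|: B & S :|: T] ->
  (forall u v : bvert V, in_src A u -> in_tgt B v ->
     ~~ blocking_arc fs S T u v) <->
  [/\ {in B, forall y, fs S (y |: T) <= fs S T},
      {in A, forall x, fs (x |: S) T <= fs S T}
    & {in A & B, forall x y, fs (x |: S) (y |: T) <= fs S T}].
Proof.
move=> dAB dAB_ST.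
have out_ST z : z \in A :|: B -> z \notin S :|: T by move/(disjointFr dAB_ST)->.
have outA x : x \in A -> x \notin S :|: T by move=> xA; rewrite out_ST // inE xA.
have outB y : y \in B -> y \notin S :|: T by move=> yB; rewrite out_ST // inE yB orbT.
split=> [no_arc | [le_B le_A le_AB]]; last first.
  case=> [|//|x] [//|//|y] //= xA yB.
  - by rewrite ltNge le_B // andbF.
  - by rewrite ltNge le_A // andbF.
  - by rewrite ltNge le_AB // !andbF.
split=> [y yB | x xA | x y xA yB].
- by have := no_arc (SO V) (Vx y) isT yB; rewrite /= outB //= -leNgt.
- by have := no_arc (Vx x) (TO V) xA isT; rewrite /= outA //= -leNgt.
- have xy : x != y by apply: contraTneq yB => <-; rewrite (disjointFr dAB xA).
  by have := no_arc (Vx x) (Vx y) xA yB; rewrite /= xy outA // outB //= -leNgt.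
Qed.

End Interpolation.

Theorem lemma3p1 (V : finType) (f : {set V} -> int)
    (fs : {set V} -> {set V} -> int) (A B S T : {set V}) :
  connectivity_function f -> interpolation f fs ->
  [disjoint A & B] -> [disjoint A & S] -> [disjoint A & T] ->
  [disjoint B & S] -> [disjoint B & T] -> [disjoint S & T] ->
  (fs (S :|: A) (T :|: B) = fs S T <->
   (forall u v : bvert V, in_src A u -> in_tgt B v ->
      ~~ blocking_arc fs S T u v)).
Proof.
move=> _ [_ mono submod _] dAB dAS dAT dBS dBT dST.
have dSA_TB : [disjoint S :|: A & T :|: B].
  by rewrite disjoints_subset setCU subUset !subsetI -!disjoints_subset
    dST dAT dAB disjoint_sym dBS.
have dAB_ST : [disjoint A :|: B & S :|: T].
  by rewrite disjoints_subset setCU subUset !subsetI -!disjoints_subset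
    dAS dAT dBS dBT.
split=> [eq_fs | /(no_blocking_arcP fs dAB dAB_ST) [le_B le_A le_AB]].
  apply/(no_blocking_arcP fs dAB dAB_ST).
  have sub_SA x : x \in A -> x |: S \subset S :|: A.
    by move=> xA; rewrite setUC setUS // sub1set.
  have sub_TB y : y \in B -> y |: T \subset T :|: B.
    by move=> yB; rewrite setUC setUS // sub1set.
  rewrite -eq_fs; split=> [y yB | x xA | x y xA yB]; apply: mono;
    by rewrite ?sub_SA ?sub_TB ?subsetUl.
apply/eqP; rewrite eq_le (interp_setU_le_local mono submod) //=.
by apply: mono; rewrite ?subsetUl.
Qed.
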